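(* Let $(P,A,\lambda)$ be a marked poset and let $x\in\mathcal{O}_{P,A}(\lambda)$. Then $x$ is a vertex of the marked order polytope $\mathcal{O}_{P,A}(\lambda)$ if and only if every connected component of the identity diagram $\mathcal{D}^\lambda_{P,A}(x)$ contains an element of $A$.
   Context: A marked poset $(P,A,\lambda)$ consists of a finite poset $P$, a subset $A\subseteq P$ containing all minimal and all maximal elements of $P$, and a vector $\lambda=(\lambda_a)_{a\in A}\in\mathbb{R}^A$ with $\lambda_a\le\lambda_b$ whenever $a\le b$. The marked order polytope is $\mathcal{O}_{P,A}(\lambda)=\{x\in\mathbb{R}^{P\setminus A}: x_p\le x_q \text{ for } p\le q;\ \lambda_a\le x_p \text{ for } a\le p;\ x_p\le\lambda_b \text{ for } p\le b\}$. For $x\in\mathcal{O}_{P,A}(\lambda)$ put $v(p)=x_p$ if $p\notin A$ and $v(p)=\lambda_p$ if $p\in A$. The identity diagram $\mathcal{D}^\lambda_{P,A}(x)$ contains the Hasse diagram of $P$ (an arrow $p\to q$ whenever $q$ covers $p$), and additionally a reverse arrow $q\to p$ whenever $p\to q$ is a Hasse arrow, $p,q$ are not both in $A$, and $v(p)=v(q)$. A set of nodes is connected if any two of its nodes are joined by a (possibly empty) chain of double arrows $p\rightleftarrows p_1\rightleftarrows\cdots\rightleftarrows p_t\rightleftarrows q$ within the set; connected components are the maximal connected subsets. *)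

From HB Require Import structures.
From mathcomp Require Import all_boot all_order all_algebra.
Set Implicit Arguments. Unset Strict Implicit. Unset Printing Implicit Defensive.
Import Order.TTheory GRing.Theory Num.Theory.
Local Open Scope ring_scope.

Section MarkedPoset.
Variables (d : Order.disp_t) (P : finPOrderType d) (R : realFieldType).

(** Marked poset condition: A contains all minimal and all maximal elements,
    lambda is order preserving on A (values of lambda outside A are unused). *)
Definition marked_poset (A : {set P}) (lambda : P -> R) : Prop :=
  (forall p : P, (forall q : P, (q <= p)%O -> q = p) -> p \in A) /\
  (forall p : P, (forall q : P, (p <= q)%O -> q = p) -> p \in A) /\
  (forall a b : P, a \in A -> b \in A -> (a <= b)%O -> lambda a <= lambda b).

Definition free_elts (A : {set P}) := {p : P | p \notin A}.

Definition val_of (A : {set P}) (lambda : P -> R)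
  (x : {ffun free_elts A -> R}) (p : P) : R :=
  match @insub P (fun q => q \notin A) (free_elts A) p with
  | Some q => x q
  | None => lambda p
  end.

Definition in_MOP (A : {set P}) (lambda : P -> R)
  (x : {ffun free_elts A -> R}) : Prop :=
  forall p q : P, (p <= q)%O -> ~~ ((p \in A) && (q \in A)) ->
    val_of lambda x p <= val_of lambda x q.

Definition is_vertex (A : {set P}) (lambda : P -> R)
  (x : {ffun free_elts A -> R}) : Prop :=
  in_MOP lambda x /\
  forall (y z : {ffun free_elts A -> R}) (t : R),
    in_MOP lambda y -> in_MOP lambda z -> 0 < t -> t < 1 ->
    (forall i, x i = t * y i + (1 - t) * z i) -> y = z.

Definition covers (p q : P) : bool :=
  (p < q)%O && [forall r : P, ~~ ((p < r)%O && (r < q)%O)].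

Definition dbl_arrow (A : {set P}) (lambda : P -> R)
  (x : {ffun free_elts A -> R}) (p q : P) : bool :=
  [&& (covers p q || covers q p), ~~ ((p \in A) && (q \in A)) &
      val_of lambda x p == val_of lambda x q].

Definition diag_connected (A : {set P}) (lambda : P -> R)
  (x : {ffun free_elts A -> R}) (S : {set P}) : Prop :=
  forall p q, p \in S -> q \in S ->
    connect [rel u w | [&& u \in S, w \in S & dbl_arrow lambda x u w]] p q.

Definition diag_component (A : {set P}) (lambda : P -> R)
  (x : {ffun free_elts A -> R}) (C : {set P}) : Prop :=
  C != set0 /\ diag_connected lambda x C /\
  forall C' : {set P}, C \subset C' -> diag_connected lambda x C' -> C' = C.

End MarkedPoset.

From mathcomp Require Import all_boot all_order all_algebra.
From mathcomp Require Import ring lra.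
Import Order.TTheory GRing.Theory Num.Theory.
Local Open Scope ring_scope.
Set Implicit Arguments. Unset Strict Implicit.

(** Write v_x for the extended value function of a point x of the polytope.
  The double arrows of the identity diagram are the cover relations along
  which v_x is constant, and the connected components of the diagram are the
  classes of the equivalence relation generated by the double arrows.

  (=>) If some component C avoids A, then C is closed under moving along a
  comparable pair with equal v_x-values (a chain of covers between them
  consists of double arrows).  Hence x +/- e * 1_C stays in the polytope as
  soon as e is at most the least positive gap between two values of v_x, and
  x is the midpoint of these two distinct points: x is not a vertex.

  (<=) If x = t y + (1 - t) z with y, z in the polytope and 0 < t < 1, the
  inequalities v_y u <= v_y w and v_z u <= v_z w along a double arrow
  u <-> w must be equalities.  So v_y and v_z are constant on components;
  each component contains a marked a, where both equal lambda a; thus y = z. *)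

Section FinitePoset.
Variables (d : Order.disp_t) (T : finPOrderType d).

Lemma down_ind (Q : T -> Prop) :
  (forall q, (forall r, (r < q)%O -> Q r) -> Q q) -> forall q, Q q.
Proof.
move=> IH q; move: {2}#|_| (leqnn #|[set r | (r < q)%O]|) => n.
elim: n q => [|n IHn] q Hq; apply: IH => r rq.
  move: Hq; rewrite leqn0 => /eqP/cards0_eq/setP/(_ r).
  by rewrite !inE rq.
apply: IHn; rewrite -ltnS; apply: leq_trans Hq; apply: proper_card.
apply/properP; split; last by exists r; rewrite !inE ?rq ?ltxx.
by apply/subsetP => s; rewrite !inE => /lt_trans; apply.
Qed.

Lemma up_ind (Q : T -> Prop) :
  (forall p, (forall r, (p < r)%O -> Q r) -> Q p) -> forall p, Q p.
Proof.
move=> IH p; move: {2}#|_| (leqnn #|[set r | (p < r)%O]|) => n.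
elim: n p => [|n IHn] p Hp; apply: IH => r pr.
  move: Hp; rewrite leqn0 => /eqP/cards0_eq/setP/(_ r).
  by rewrite !inE pr.
apply: IHn; rewrite -ltnS; apply: leq_trans Hp; apply: proper_card.
apply/properP; split; last by exists r; rewrite !inE ?pr ?ltxx.
by apply/subsetP => s; rewrite !inE; apply: lt_trans.
Qed.

Lemma cover_up (p q : T) : (p < q)%O -> exists2 r, covers p r & (r <= q)%O.
Proof.
elim/down_ind: q => q IH pq.
have [nomid|] := boolP [forall r, ~~ ((p < r)%O && (r < q)%O)].
  by exists q; rewrite /covers ?pq ?nomid.
rewrite negb_forall => /existsP[r]; rewrite negbK => /andP[pr rq].
have [s ps sr] := IH r rq pr.
by exists s => //; apply: le_trans sr (ltW rq).
Qed.

Lemma up_closed (d' : Order.disp_t) (U : porderType d') (f : T -> U)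
    (S : {set T}) :
  {homo f : u w / (u <= w)%O} ->
  (forall u w, u \in S -> covers u w -> f u = f w -> w \in S) ->
  forall p q, p \in S -> (p <= q)%O -> f p = f q -> q \in S.
Proof.
move=> f_mono S_cl p q; elim/up_ind: p => p IH pS pq fpq.
have [<- //|neq] := eqVneq p q.
have ltpq : (p < q)%O by rewrite lt_neqAle neq pq.
have [r pr rq] := cover_up ltpq.
have ltpr : (p < r)%O by case/andP: pr.
have fpr : f p = f r.
  by apply: le_anti; rewrite f_mono ?(ltW ltpr) //= fpq f_mono.
by apply: IH ltpr (S_cl _ _ pS pr fpr) rq _; rewrite -fpr.
Qed.

End FinitePoset.

Lemma positive_gap (T : finType) (R : realFieldType) (f : T -> R) :
  exists2 e : R, 0 < e & forall u w, f u < f w -> e <= f w - f u.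
Proof.
pose gap (uw : T * T) := f uw.2 - f uw.1.
exists (\big[Order.min/1]_(uw | f uw.1 < f uw.2) gap uw).
  by apply/bigmin_gtP; split=> // uw; rewrite subr_gt0.
by move=> u w fuw; exact: (@bigmin_le_cond _ _ _ 1 (u, w) _ gap fuw).
Qed.

Lemma convex_comb_eq (R : realFieldType) (t a b c k : R) :
  0 < t -> t < 1 -> a <= b -> c <= k ->
  t * a + (1 - t) * c = t * b + (1 - t) * k -> a = b /\ c = k.
Proof. by move=> t0 t1 ab ck e; split; nra. Qed.

Lemma connect_invariant (T : finType) (U : Type) (e : rel T) (f : T -> U) :
  (forall u w, e u w -> f u = f w) -> forall p q, connect e p q -> f p = f q.
Proof.
move=> fe p q /connectP[s]; elim: s p => [_ _ -> //|w s IH] p /=.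
by move=> /andP[epw path_s] last_s; rewrite (fe _ _ epw); apply: IH.
Qed.

Section MarkedPolytope.
Variables (d : Order.disp_t) (P : finPOrderType d) (R : realFieldType).
Variables (A : {set P}) (lambda : P -> R).

Notation point := {ffun free_elts A -> R}.

Lemma val_of_free (x : point) (i : free_elts A) : val_of lambda x (val i) = x i.
Proof. by rewrite /val_of valK. Qed.

Lemma val_of_marked (x : point) (p : P) : p \in A -> val_of lambda x p = lambda p.
Proof. by move=> pA; rewrite /val_of insubN // negbK. Qed.

Lemma point_eq (y z : point) :
  (forall p, val_of lambda y p = val_of lambda z p) -> y = z.
Proof. by move=> yz; apply/ffunP => i; rewrite -!val_of_free. Qed.

Lemma val_of_comb (x y z : point) (t : R) (p : P) :
  (forall i, x i = t * y i + (1 - t) * z i) ->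
  val_of lambda x p = t * val_of lambda y p + (1 - t) * val_of lambda z p.
Proof.
move=> xyz; rewrite /val_of; case: insubP => [i _ _|_]; first exact: xyz.
by rewrite mulrBl mul1r addrCA subrr addr0.
Qed.

Lemma val_of_mono (x : point) :
  marked_poset A lambda -> in_MOP lambda x ->
  {homo val_of lambda x : p q / (p <= q)%O}.
Proof.
move=> [_ [_ lambda_mono]] x_in p q pq.
have [/andP[pA qA]|] := boolP ((p \in A) && (q \in A)); last exact: x_in.
by rewrite !val_of_marked //; apply: lambda_mono.
Qed.

Definition bump (x : point) (S : {set P}) (c : R) : point :=
  [ffun i => x i + c * (val i \in S)%:R].

Lemma val_of_bump (x : point) (S : {set P}) (c : R) (p : P) :
  (forall q, q \in S -> q \notin A) ->
  val_of lambda (bump x S c) p = val_of lambda x p + c * (p \in S)%:R.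
Proof.
move=> SnA; rewrite /val_of; case: insubP => [i _ <-|]; first by rewrite ffunE.
rewrite negbK => pA; have /negPf -> : p \notin S by apply: contraL pA; apply: SnA.
by rewrite mulr0 addr0.
Qed.

Lemma bump_in_MOP (x : point) (S : {set P}) (c e : R) :
  in_MOP lambda x -> (forall q, q \in S -> q \notin A) ->
  (forall u w, (u <= w)%O -> val_of lambda x u = val_of lambda x w ->
     (u \in S) = (w \in S)) ->
  (forall u w, val_of lambda x u < val_of lambda x w ->
     e <= val_of lambda x w - val_of lambda x u) ->
  `|c| <= e -> in_MOP lambda (bump x S c).
Proof.
move=> x_in SnA S_level gap; rewrite ler_norml => /andP[ce ec] p q pq nA.
rewrite !val_of_bump //; have := x_in p q pq nA.
rewrite le_eqVlt => /orP[/eqP fpq|fpq]; first by rewrite (S_level p q) ?fpq.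
have := gap p q fpq.
by case: (p \in S); case: (q \in S); rewrite /= ?mulr1 ?mulr0 ?addr0 => ?; lra.
Qed.

Section Diagram.
Variable x : point.

Lemma dbl_arrow_sym u w : dbl_arrow lambda x u w = dbl_arrow lambda x w u.
Proof. by rewrite /dbl_arrow orbC eq_sym [(w \in A) && _]andbC. Qed.

Lemma dbl_connect_sym : connect_sym (dbl_arrow lambda x).
Proof. by apply: sym_connect_sym => u w; rewrite dbl_arrow_sym. Qed.

Definition diag_class (p : P) : {set P} := [set q | connect (dbl_arrow lambda x) p q].

Lemma diag_class_self p : p \in diag_class p.
Proof. by rewrite inE connect0. Qed.

Lemma diag_class_step p u w :
  u \in diag_class p -> dbl_arrow lambda x u w -> w \in diag_class p.
Proof. by rewrite !inE => pu uw; apply: connect_trans pu (connect1 uw). Qed.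

Lemma connect_within (S : {set P}) p q :
  connect [rel u w | [&& u \in S, w \in S & dbl_arrow lambda x u w]] p q ->
  connect (dbl_arrow lambda x) p q.
Proof. by apply: connect_sub => u w /and3P[_ _ uw]; apply: connect1. Qed.

Lemma diag_class_connected p : diag_connected lambda x (diag_class p).
Proof.
have from_class q r : q \in diag_class p -> connect (dbl_arrow lambda x) q r ->
    connect [rel u w | [&& u \in diag_class p, w \in diag_class p &
                          dbl_arrow lambda x u w]] q r.
  move=> qC /connectP[s]; elim: s q qC => [|w s IH] q qC /=; first by move=> _ ->.
  move=> /andP[qw path_s] last_s; have wC := diag_class_step qC qw.
  by apply: connect_trans (connect1 _) (IH w wC path_s last_s); rewrite /= qC wC.
move=> q r qC rC; apply: (from_class _ _ qC).
by move: qC rC; rewrite !inE dbl_connect_sym; apply: connect_trans.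
Qed.

Lemma diag_class_component p : diag_component lambda x (diag_class p).
Proof.
split; first by apply/set0Pn; exists p; apply: diag_class_self.
split; first exact: diag_class_connected.
move=> C' sub C'_conn; apply/eqP; rewrite eqEsubset sub andbT.
apply/subsetP => q qC'; have pC' := subsetP sub p (diag_class_self p).
by rewrite inE (connect_within (C'_conn p q pC' qC')).
Qed.

Lemma diag_component_class C p :
  diag_component lambda x C -> p \in C -> C = diag_class p.
Proof.
move=> [_ [C_conn C_max]] pC; apply/esym/C_max; last exact: diag_class_connected.
by apply/subsetP => q qC; rewrite inE (connect_within (C_conn p q pC qC)).
Qed.

(** An unmarked class is closed under comparable pairs with equal values:
  a chain of covers between such a pair consists of double arrows. *)
Lemma diag_class_level p :
  marked_poset A lambda -> in_MOP lambda x ->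
  (forall q, q \in diag_class p -> q \notin A) ->
  forall u w, (u <= w)%O -> val_of lambda x u = val_of lambda x w ->
    (u \in diag_class p) = (w \in diag_class p).
Proof.
move=> marked x_in CnA u w uw fuw; have f_mono := val_of_mono marked x_in.
have arrow u' w' : covers u' w' -> ~~ ((u' \in A) && (w' \in A)) ->
    val_of lambda x u' = val_of lambda x w' -> dbl_arrow lambda x u' w'.
  by move=> cov nA f_eq; rewrite /dbl_arrow cov nA f_eq eqxx.
apply/idP/idP => [uC|wC].
  apply: (up_closed f_mono _ uC uw fuw) => u' w' u'C cov f_eq.
  have nA : ~~ ((u' \in A) && (w' \in A)) by rewrite (negPf (CnA _ u'C)).
  exact: diag_class_step u'C (arrow _ _ cov nA f_eq).
apply/negP => /negP uC; suff: w \in ~: diag_class p by rewrite inE wC.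
apply: (up_closed f_mono _ _ uw fuw); last by rewrite in_setC.
move=> u' w'; rewrite !in_setC => u'C cov f_eq; apply: contra u'C => w'C.
have nA : ~~ ((u' \in A) && (w' \in A)) by rewrite andbC (negPf (CnA _ w'C)).
by apply: diag_class_step w'C _; rewrite dbl_arrow_sym arrow.
Qed.

End Diagram.

Lemma vertex_components_marked (x : point) :
  marked_poset A lambda -> is_vertex lambda x ->
  forall C, diag_component lambda x C -> exists2 a, a \in A & a \in C.
Proof.
move=> marked [x_in x_extreme] C C_comp.
have [a /andP[aA aC]|unmarked] := pickP [pred a | (a \in A) && (a \in C)].
  by exists a.
have [p0 p0C] := set0Pn _ C_comp.1.
have CnA q : q \in C -> q \notin A.
  by move=> qC; have := unmarked q; rewrite /= qC andbT => ->.
have C_def := diag_component_class C_comp p0C; rewrite C_def in p0C CnA.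
set C' := diag_class x p0 in p0C CnA.
have [e e0 gap] := positive_gap (val_of lambda x).
have bump_in c : `|c| <= e -> in_MOP lambda (bump x C' c).
  by apply: bump_in_MOP => //; apply: diag_class_level.
have midpoint i : x i = 1 / 2 * bump x C' e i + (1 - 1 / 2) * bump x C' (- e) i.
  by rewrite !ffunE; field.
have bumps_eq : bump x C' e = bump x C' (- e).
  apply: (x_extreme _ _ _ (bump_in e _) (bump_in (- e) _) _ _ midpoint);
    rewrite ?normrN ?(ger0_norm (ltW e0)) //; lra.
have := congr1 (fun y : point => y (exist _ p0 (CnA p0 p0C))) bumps_eq.
rewrite !ffunE /= p0C !mulr1 => /addrI e_eq.
by have := e0; rewrite {1}e_eq oppr_gt0 ltNge (ltW e0).
Qed.

Lemma dbl_arrow_split (x y z : point) t u w :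
  in_MOP lambda y -> in_MOP lambda z -> 0 < t -> t < 1 ->
  (forall i, x i = t * y i + (1 - t) * z i) -> dbl_arrow lambda x u w ->
  val_of lambda y u = val_of lambda y w /\ val_of lambda z u = val_of lambda z w.
Proof.
move=> y_in z_in t0 t1 xyz.
wlog cov : u w / covers u w.
  move=> W /[dup] uw /and3P[/orP[cov|cov] _ _]; first exact: W.
  by rewrite dbl_arrow_sym in uw; have [-> ->] := W _ _ cov uw.
move=> /and3P[_ nA /eqP f_eq]; have uw : (u <= w)%O by case/andP: cov => /ltW.
apply: convex_comb_eq t0 t1 (y_in u w uw nA) (z_in u w uw nA) _.
by rewrite -!(val_of_comb _ xyz).
Qed.

Lemma components_marked_vertex (x : point) :
  in_MOP lambda x ->
  (forall C, diag_component lambda x C -> exists2 a, a \in A & a \in C) ->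
  is_vertex lambda x.
Proof.
move=> x_in marked_comp; split=> // y z t y_in z_in t0 t1 xyz.
apply: point_eq => p; have [a aA] := marked_comp _ (diag_class_component x p).
rewrite inE => pa; have split_arrow := dbl_arrow_split y_in z_in t0 t1 xyz.
rewrite (connect_invariant (fun u w uw => (split_arrow u w uw).1) pa).
rewrite (connect_invariant (fun u w uw => (split_arrow u w uw).2) pa).
by rewrite !val_of_marked.
Qed.

End MarkedPolytope.

Theorem theorem2 (d : Order.disp_t) (P : finPOrderType d) (R : realFieldType)
  (A : {set P}) (lambda : P -> R) (x : {ffun free_elts A -> R}) :
  marked_poset A lambda ->
  in_MOP lambda x ->
  (is_vertex lambda x <->
   forall C : {set P}, diag_component lambda x C -> exists2 a, a \in A & a \in C).
Proof.
move=> marked x_in; split; first exact: vertex_components_marked.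
exact: components_marked_vertex.
Qed.
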